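(* For any discrete group $G$, $HC^\pm_\bullet(kG;1,\varepsilon)\cong HC^\pm_\bullet(G,k)$.
   Context: $k$ is a field of characteristic $0$; $kG$ is the group Hopf algebra ($\Delta(g)=g\otimes g$, $\varepsilon(g)=1$, $S(g)=g^{-1}$). $HC^\pm_\bullet(kG;1,\varepsilon)$ is the dihedral homology of the dihedral module $\mathrm{CC}_n(kG;1,\varepsilon)=(kG)^{\otimes n}$ with faces $\partial_0(g_1\otimes\cdots\otimes g_n)=g_2\otimes\cdots\otimes g_n$, $\partial_i=g_1\otimes\cdots\otimes g_ig_{i+1}\otimes\cdots\otimes g_n$ ($1\le i\le n-1$), $\partial_n=g_1\otimes\cdots\otimes g_{n-1}$, degeneracies inserting $1$, $\tau_n(g_1\otimes\cdots\otimes g_n)=(g_1\cdots g_n)^{-1}\otimes g_1\otimes\cdots\otimes g_{n-1}$, $\omega_n(g_1\otimes\cdots\otimes g_n)=g_n^{-1}\otimes\cdots\otimes g_1^{-1}$. The dihedral group homology $HC^\pm_\bullet(G,k)$ is the dihedral homology of the dihedral submodule of the standard dihedral module of the $*$-algebra $kG$ (with $g^*=g^{-1}$; $\mathcal{A}^{\otimes n+1}$ with faces multiplying adjacent factors and cyclically the last with the first, $\tau_n(a_0\otimes\cdots\otimes a_n)=a_n\otimes a_0\otimes\cdots\otimes a_{n-1}$, $\omega_n(a_0\otimes\cdots\otimes a_n)=a_0^*\otimes a_n^*\otimes\cdots\otimes a_1^*$) spanned by the tensors $g_0\otimes\cdots\otimes g_n$ with $g_i\in G$ and $g_0g_1\cdots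 g_n=1$. Dihedral homology means homology of the $\pm1$-eigenspaces of the involution on the cyclic complex. *)

From HB Require Import structures.
From mathcomp Require Import all_boot all_order all_algebra.
From mathcomp Require Import finmap.
From mathcomp.multinomials Require Import monalg.

Set Implicit Arguments.
Unset Strict Implicit.
Unset Printing Implicit Defensive.

Import GRing.Theory.
Local Open Scope ring_scope.

(* A dihedral k-module whose structure maps are k-linear extensions of maps  *)
(* of bases.  [dX n] is a basis of the degree-n module (so the module is the *)
(* free k-module {malg k[dX n]}), [dface n i] is the face d_i : degree n+1   *)
(* -> degree n (i = 0..n+1), [dtau n] is tau_n, [domega n] is omega_n.       *)
(* [dsub n] is a subset of the basis: the dihedral module under              *)
(* consideration is the submodule spanned by the basis elements in           *)
(* [dsub n] (the operators are given on the ambient module).  Degeneracies   *)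
(* play no role in the cyclic (Connes) complex and are omitted.              *)
Record dihedral_basis := DihedralBasis {
  dX : nat -> choiceType;
  dface : forall n, 'I_n.+2 -> dX n.+1 -> dX n;
  dtau : forall n, dX n -> dX n;
  domega : forall n, dX n -> dX n;
  dsub : forall n, pred (dX n)
}.

Section DihedralHomology.
Variable k : fieldType.

Definition linext (X Y : choiceType) (f : X -> Y) (p : {malg k[X]}) :
  {malg k[Y]} := \sum_(x <- msupp p) << p@_x *g f x >>.

Variable D : dihedral_basis.

Definition Ch n := {malg k[dX D n]}.

Definition inM n (p : Ch n) : Prop := forall x, x \in msupp p -> @dsub D n x.

Definition bnd n (p : Ch n.+1) : Ch n :=
  \sum_(i < n.+2) (-1) ^+ i *: linext (@dface D n i) p.

Definition cyc n (p : Ch n) : Ch n := (-1) ^+ n *: linext (@dtau D n) p.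

Definition invol n (p : Ch n) : Ch n :=
  (-1) ^+ 'C(n.+1, 2) *: linext (@domega D n) p.

(* I_n = (1 - t_n) M_n : C^lambda_n = M_n / I_n is the Connes complex *)
Definition inI n (p : Ch n) : Prop := exists u : Ch n, inM u /\ p = u - cyc u.

(* E_n(s) / I_n is the (-1)^s eigenspace of y on C^lambda_n *)
Definition inE (s : bool) n (p : Ch n) : Prop :=
  inM p /\ inI (invol p - (-1) ^+ s *: p).

Definition isCycle (s : bool) n : Ch n -> Prop :=
  match n return Ch n -> Prop with
  | 0 => fun p => inE s p
  | m.+1 => fun p => inE s p /\ inI (bnd p)
  end.

Definition isBoundary (s : bool) n (p : Ch n) : Prop :=
  exists u : Ch n, exists w : Ch n.+1,
    [/\ inM u, inE s w & p = (u - cyc u) + bnd w].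

End DihedralHomology.

(* HC^{(-1)^s}_n(D1) ~= HC^{(-1)^s}_n(D2) as k-vector spaces: there is a map *)
(* on cycle representatives, k-linear on cycles, preserving cycles and      *)
(* boundaries, and inducing a bijection on homology classes.                *)
Definition HC_iso (k : fieldType) (s : bool) (n : nat)
    (D1 D2 : dihedral_basis) : Prop :=
  exists f : Ch k D1 n -> Ch k D2 n,
  [/\ forall (a : k) (x y : Ch k D1 n), isCycle s x -> isCycle s y ->
        f (a *: x + y) = a *: f x + f y,
      forall x : Ch k D1 n, isCycle s x -> isCycle s (f x),
      forall x : Ch k D1 n, isCycle s x -> isBoundary s x -> isBoundary s (f x),
      forall x : Ch k D1 n, isCycle s x -> isBoundary s (f x) -> isBoundary s x
    & forall z : Ch k D2 n, isCycle s z ->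
        exists2 x : Ch k D1 n, isCycle s x & isBoundary s (f x - z)].

(* The two dihedral modules for a group G.  Tensors g_1 (x) ... (x) g_m of   *)
(* group elements are encoded as finite functions 'I_m -> G (the basis of    *)
(* (kG)^{(x) m}); operations are written on the sequence of entries.        *)
Section GroupDihedral.
Variable G : groupType.
Local Open Scope group_scope.

Definition mkT m (s : seq G) : {ffun 'I_m -> G} := [ffun j : 'I_m => nth 1 s (nat_of_ord j)].
Definition gprod (s : seq G) : G := foldr (fun a b => a * b) 1 s.

(* CC_n(kG;1,eps) = (kG)^{(x) n}, basis G^n *)
Definition cc_face_seq (i : nat) (s : seq G) : seq G :=
  if i == 0%N then behead s
  else if (i < size s)%N
       then take i.-1 s ++ (nth 1 s i.-1 * nth 1 s i) :: drop i.+1 s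
       else take i.-1 s.
Definition cc_tau_seq (s : seq G) : seq G :=
  (gprod s)^-1 :: take (size s).-1 s.
Definition cc_omega_seq (s : seq G) : seq G := rev (map (fun g => g^-1) s).

Definition CC_basis : dihedral_basis :=
  @DihedralBasis (fun n => {ffun 'I_n -> G} : choiceType)
    (fun n i x => mkT n (cc_face_seq i (codom x)))
    (fun n x => mkT n (cc_tau_seq (codom x)))
    (fun n x => mkT n (cc_omega_seq (codom x)))
    (fun n x => true).

(* Standard dihedral module of the *-algebra kG: degree n is kG^{(x) n+1},  *)
(* basis G^{n+1}; dihedral submodule spanned by g_0 (x) ... (x) g_n with     *)
(* g_0 g_1 ... g_n = 1.                                                     *)
Definition std_face_seq (i : nat) (s : seq G) : seq G :=
  if (i.+1 < size s)%N
  then take i s ++ (nth 1 s i * nth 1 s i.+1) :: drop i.+2 s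
  else (nth 1 s (size s).-1 * nth 1 s 0) :: take (size s - 2) (behead s).
Definition std_tau_seq (s : seq G) : seq G := rotr 1 s.
Definition std_omega_seq (s : seq G) : seq G :=
  (head 1 s)^-1 :: rev (map (fun g => g^-1) (behead s)).

Definition Std_basis : dihedral_basis :=
  @DihedralBasis (fun n => {ffun 'I_n.+1 -> G} : choiceType)
    (fun n i x => mkT n.+1 (std_face_seq i (codom x)))
    (fun n x => mkT n.+1 (std_tau_seq (codom x)))
    (fun n x => mkT n.+1 (std_omega_seq (codom x)))
    (fun n x => gprod (codom x) == 1).

End GroupDihedral.

(* The map (g_1, ..., g_n) |-> ((g_1 ... g_n)^-1, g_1, ..., g_n) is a
   bijection from G^n onto the tuples (g_0, ..., g_n) with g_0 g_1 ... g_n = 1,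
   inverse to forgetting g_0.  It intertwines the faces, tau and omega of
   CC(kG;1,eps) with those of the standard dihedral module of kG, so its
   k-linear extension is an isomorphism of dihedral modules onto the dihedral
   submodule; such an isomorphism already identifies the (+-1)-eigenspace
   complexes at the chain level. *)
From Pilot Require Import Defs.
From HB Require Import structures.
From mathcomp Require Import all_boot all_order all_algebra.
From mathcomp Require Import finmap.
From mathcomp.multinomials Require Import monalg.
From mathcomp Require Import zify.

Set Implicit Arguments.
Unset Strict Implicit.
Unset Printing Implicit Defensive.

Import GRing.Theory.
Local Open Scope ring_scope.

Section LinearExtension.
Variable k : fieldType.
Implicit Types X Y Z : choiceType.

Lemma linextEw X Y (f : X -> Y) (p : {malg k[X]}) (d : {fset X}) :
  (msupp p `<=` d)%fset -> linext f p = \sum_(x <- d) << p@_x *g f x >>.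
Proof.
move=> le_pd; apply: big_fset_incl => // x _ /mcoeff_outdom->.
by rewrite monalgU0.
Qed.

Lemma linext_is_linear X Y (f : X -> Y) : linear (@linext k X Y f).
Proof.
move=> a p q; have le_supp := fsubset_trans (msuppD_le (a *: p) q)
                                 (fsetSU (msupp q) (msuppZ_le a p)).
rewrite (linextEw f le_supp) (linextEw f (fsubsetUl (msupp p) (msupp q))).
rewrite (linextEw f (fsubsetUr (msupp p) (msupp q))) scaler_sumr -big_split /=.
apply: eq_bigr => x _; apply/malgP => y.
by rewrite !(mcoeffD, mcoeffZ, mcoeffU) mulrnDl mulrnAr.
Qed.

HB.instance Definition _ X Y (f : X -> Y) :=
  GRing.isLinear.Build k {malg k[X]} {malg k[Y]} _ (@linext k X Y f)
    (linext_is_linear f).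

Lemma linextU X Y (f : X -> Y) (c : k) (x : X) :
  linext f << c *g x >> = << c *g f x >>.
Proof.
rewrite /linext msuppU; have [->|_] := eqVneq c 0; first by rewrite big_nil monalgU0.
by rewrite big_seq_fset1 mcoeffUU.
Qed.

Lemma linext_comp X Y Z (f : X -> Y) (g : Y -> Z) (p : {malg k[X]}) :
  linext g (linext f p) = linext (g \o f) p.
Proof.
by rewrite [linext f p]/linext linear_sum; apply: eq_bigr => x _ /=; rewrite linextU.
Qed.

Lemma linext_id X (p : {malg k[X]}) : linext id p = p.
Proof. exact: esym (monalgE p). Qed.

Lemma eq_in_linext X Y (f g : X -> Y) (p : {malg k[X]}) :
  {in msupp p, f =1 g} -> linext f p = linext g p.
Proof. by move=> efg; rewrite /linext !big_seq; apply: eq_bigr => x /efg->. Qed.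

Lemma linext_comm X X' Y Y' (f : X -> Y) (g : X -> X') (h : Y -> Y')
    (f' : X' -> Y') (p : {malg k[X]}) :
  (forall x, f' (g x) = h (f x)) -> linext f' (linext g p) = linext h (linext f p).
Proof. by move=> comm; rewrite !linext_comp; apply: eq_in_linext => x _ /=. Qed.

Lemma msupp_linext X Y (f : X -> Y) (P : pred Y) (p : {malg k[X]}) :
  (forall x, P (f x)) -> {in msupp (linext f p), forall y, P y}.
Proof.
move=> Pf y; apply: contraTT => Py; rewrite -mcoeff_eq0 /linext raddf_sum /=.
rewrite big1 // => x _; rewrite mcoeffU; case: eqP => // fx_y.
by rewrite -fx_y Pf in Py.
Qed.

End LinearExtension.

Section DihedralHomologyZero.
Variables (k : fieldType) (D : dihedral_basis) (s : bool).

Lemma inM0 n : inM (0 : Ch k D n).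
Proof. by move=> x; rewrite msupp0. Qed.

Lemma inI0 n : inI (0 : Ch k D n).
Proof. by exists 0; split; [exact: inM0 | rewrite /cyc linear0 scaler0 subrr]. Qed.

Lemma isCycle_inM n (p : Ch k D n) : isCycle s p -> inM p.
Proof. by case: n p => [|n] p /= => [[]|[[]]]. Qed.

Lemma isBoundary0 n : isBoundary s (0 : Ch k D n).
Proof.
exists 0, 0; split; first exact: inM0.
- split; first exact: inM0.
  by rewrite /invol linear0 scaler0 scaler0 subrr; exact: inI0.
rewrite /cyc /bnd linear0 scaler0 subrr add0r big1 // => i _.
by rewrite linear0 scaler0.
Qed.

End DihedralHomologyZero.

Section DihedralIsomorphism.
Variables (k : fieldType) (D1 D2 : dihedral_basis) (s : bool).
Variable F : forall n, {linear Ch k D1 n -> Ch k D2 n}.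
Hypothesis F_inj : forall n, injective (F n).
Hypothesis F_cyc : forall n (p : Ch k D1 n), F n (cyc p) = cyc (F n p).
Hypothesis F_invol : forall n (p : Ch k D1 n), F n (invol p) = invol (F n p).
Hypothesis F_bnd : forall n (p : Ch k D1 n.+1), F n (bnd p) = bnd (F n.+1 p).
Hypothesis F_inM : forall n (p : Ch k D1 n), inM p -> inM (F n p).
Hypothesis F_onto_inM : forall n (q : Ch k D2 n),
  inM q -> exists2 p : Ch k D1 n, inM p & F n p = q.

Lemma inI_map n (p : Ch k D1 n) : inI (F n p) <-> inI p.
Proof.
split; last by case=> u [Mu ->]; exists (F n u); rewrite linearB F_cyc; split; auto.
case=> v [Mv Fp]; have [u Mu Fu] := F_onto_inM Mv.
by exists u; split => //; apply: F_inj; rewrite linearB F_cyc Fu.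
Qed.

Lemma inE_map n (p : Ch k D1 n) : Defs.inE s (F n p) <-> Defs.inE s p.
Proof.
rewrite /Defs.inE.
have ->: invol (F n p) - (-1) ^+ s *: F n p = F n (invol p - (-1) ^+ s *: p).
  by rewrite linearB F_invol [F n (_ *: _)]linearZ.
rewrite inI_map; split=> -[Mp Ip]; split=> //; last exact: F_inM.
by have [p' Mp' /F_inj <-] := F_onto_inM Mp.
Qed.

Lemma isCycle_map n (p : Ch k D1 n) : isCycle s (F n p) <-> isCycle s p.
Proof. by case: n p => [|n] p /=; rewrite ?inE_map // -F_bnd inI_map. Qed.

Lemma isBoundary_map n (p : Ch k D1 n) : isBoundary s (F n p) <-> isBoundary s p.
Proof.
split; last first.
  case=> u [w [Mu Ew ->]]; exists (F n u), (F n.+1 w).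
  by rewrite -inE_map in Ew; rewrite linearD linearB F_cyc F_bnd; split; auto.
case=> v [z [Mv Ez Fp]]; have [u Mu Fu] := F_onto_inM Mv.
have [w _ Fw] := F_onto_inM (proj1 Ez); rewrite -Fw inE_map in Ez.
exists u, w; split=> //; apply: F_inj.
by rewrite Fp linearD linearB F_cyc F_bnd Fu Fw.
Qed.

Lemma HC_iso_of_linear_iso n : HC_iso k s n D1 D2.
Proof.
exists (F n); split.
- by move=> a p q _ _; rewrite linearP.
- by move=> p /isCycle_map.
- by move=> p _ /isBoundary_map.
- by move=> p _ /isBoundary_map.
move=> q Cq; have [p _ Fp] := F_onto_inM (isCycle_inM Cq).
exists p; first by rewrite -isCycle_map Fp.
by rewrite Fp subrr; exact: isBoundary0.
Qed.

End DihedralIsomorphism.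

Section GroupSequences.
Variable G : groupType.
Local Open Scope group_scope.
Implicit Types s t : seq G.

Definition cons_invprod s : seq G := (gprod s)^-1 :: s.

Lemma gprod_cat s t : gprod (s ++ t) = gprod s * gprod t.
Proof. by elim: s => [|a s IHs] /=; rewrite ?mul1g // IHs mulgA. Qed.

Lemma gprod_rcons s (a : G) : gprod (rcons s a) = gprod s * a.
Proof. by rewrite -cats1 gprod_cat /= mulg1. Qed.

Lemma gprod_cons_invprod s : gprod (cons_invprod s) = 1.
Proof. exact: mulVg. Qed.

Lemma cons_invprod_face n s (i : nat) : size s = n.+1 -> (i <= n.+1)%N ->
  size (cc_face_seq i s) = n /\
  cons_invprod (cc_face_seq i s) = std_face_seq i (cons_invprod s).
Proof.
rewrite /cons_invprod; case: i => [|j] size_s le_jn.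
  case: s size_s => [|a t] //= [size_t]; split=> //.
  by rewrite /cc_face_seq /std_face_seq /= drop0 invgM -mulgA mulVg mulg1.
have [lt_jn|ge_jn] := ltnP j n.
  have def_s : s = take j s ++ nth 1 s j :: nth 1 s j.+1 :: drop j.+2 s.
    by rewrite -!drop_nth ?cat_take_drop // size_s ltnS // ltnW.
  rewrite /cc_face_seq /std_face_seq /= size_s !ltnS lt_jn; split.
    by rewrite size_cat /= size_take size_drop size_s ltnS ltnW //; lia.
  by congr (_^-1 :: _); rewrite [in RHS]def_s !gprod_cat /= !mulgA.
have -> : j = n by lia.
case/lastP: s size_s => [|t a] //; rewrite size_rcons => -[size_t].
rewrite /cc_face_seq /std_face_seq /= !size_rcons size_t ltnn -cats1.
rewrite take_size_cat // subn2 /= take_size_cat // nth_cat size_t ltnn subnn.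
split=> //=.
by rewrite ltnn gprod_cat /= mulg1 invgM mulVKg.
Qed.

Lemma cons_invprod_tau s : s != [::] ->
  size (cc_tau_seq s) = size s /\
  cons_invprod (cc_tau_seq s) = std_tau_seq (cons_invprod s).
Proof.
case/lastP: s => [|t a] // _; rewrite /cc_tau_seq size_rcons -cats1 take_size_cat //.
rewrite cats1 /cons_invprod /std_tau_seq -rcons_cons rotr1_rcons; split=> //=.
by rewrite invgM invgK gprod_rcons mulKg.
Qed.

Lemma gprod_cc_omega_seq s : gprod (cc_omega_seq s) = (gprod s)^-1.
Proof.
rewrite /cc_omega_seq; elim: s => [|a s IHs] /=; first by rewrite invg1.
by rewrite rev_cons gprod_rcons IHs invgM.
Qed.

Lemma cons_invprod_omega s :
  size (cc_omega_seq s) = size s /\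
  cons_invprod (cc_omega_seq s) = std_omega_seq (cons_invprod s).
Proof.
split; first by rewrite /cc_omega_seq size_rev size_map.
by rewrite /cons_invprod gprod_cc_omega_seq.
Qed.

End GroupSequences.

Section GroupTuples.
Variable G : groupType.
Local Open Scope group_scope.

Lemma size_codom_ffun m (x : {ffun 'I_m -> G}) : size (codom x) = m.
Proof. by rewrite size_codom card_ord. Qed.

Lemma codom_mkT m (s : seq G) : size s = m -> codom (mkT m s) = s.
Proof.
move=> size_s; apply: (@eq_from_nth _ 1); first by rewrite size_codom_ffun.
move=> i; rewrite size_codom_ffun => lt_im.
by rewrite codomE (nth_map (Ordinal lt_im)) ?size_enum_ord // ffunE nth_enum_ord.
Qed.

Lemma mkT_codom m (x : {ffun 'I_m -> G}) : mkT m (codom x) = x.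
Proof.
by apply/ffunP => j; rewrite ffunE codomE (nth_map j) ?size_enum_ord ?nth_ord_enum.
Qed.

Definition to_std n (x : {ffun 'I_n -> G}) : {ffun 'I_n.+1 -> G} :=
  mkT n.+1 (cons_invprod (codom x)).
Definition of_std n (y : {ffun 'I_n.+1 -> G}) : {ffun 'I_n -> G} :=
  mkT n (behead (codom y)).

Lemma codom_to_std n (x : {ffun 'I_n -> G}) :
  codom (to_std x) = cons_invprod (codom x).
Proof. by rewrite codom_mkT //= size_codom_ffun. Qed.

Lemma to_std_face n (i : 'I_n.+2) (x : {ffun 'I_n.+1 -> G}) :
  to_std (@dface (CC_basis G) n i x) = @dface (Std_basis G) n i (to_std x).
Proof.
have [size_face face] := cons_invprod_face (size_codom_ffun x) (ltn_ord i).
by rewrite /= codom_to_std /to_std codom_mkT // face.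
Qed.

Lemma to_std_tau n (x : {ffun 'I_n -> G}) :
  to_std (@dtau (CC_basis G) n x) = @dtau (Std_basis G) n (to_std x).
Proof.
rewrite /= codom_to_std /to_std; case: n x => [|n] x.
  have codom0 (y : {ffun 'I_0 -> G}) : codom y = [::].
    exact: size0nil (size_codom_ffun y).
  by rewrite !codom0.
have /cons_invprod_tau[size_tau tau] : codom x != [::].
  by rewrite -size_eq0 size_codom_ffun.
by rewrite codom_mkT ?size_tau ?size_codom_ffun // tau.
Qed.

Lemma to_std_omega n (x : {ffun 'I_n -> G}) :
  to_std (@domega (CC_basis G) n x) = @domega (Std_basis G) n (to_std x).
Proof.
have [size_omega omega] := cons_invprod_omega (codom x).
by rewrite /= codom_to_std /to_std codom_mkT ?size_omega ?size_codom_ffun // omega.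
Qed.

Lemma to_std_sub n (x : {ffun 'I_n -> G}) : @dsub (Std_basis G) n (to_std x).
Proof. by rewrite /= codom_to_std gprod_cons_invprod. Qed.

Lemma to_stdK n : cancel (@to_std n) (@of_std n).
Proof. by move=> x; rewrite /of_std codom_to_std mkT_codom. Qed.

Lemma of_std_subK n (y : {ffun 'I_n.+1 -> G}) :
  @dsub (Std_basis G) n y -> to_std (of_std y) = y.
Proof.
rewrite /= /to_std /of_std; have := size_codom_ffun y.
case def_y: (codom y) => [|g t] //= [size_t] /eqP /mulg1_eq def_g.
by rewrite codom_mkT // /cons_invprod -def_g invgK -def_y mkT_codom.
Qed.

End GroupTuples.

Theorem proposition5p6 (k : fieldType) (k_char0 : [pchar k] =i pred0)
    (G : groupType) (s : bool) (n : nat) :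
  HC_iso k s n (CC_basis G) (Std_basis G).
Proof.
(* The isomorphism holds at the chain level. *)
pose F m : {linear Ch k (CC_basis G) m -> Ch k (Std_basis G) m} :=
  linext (@to_std G m).
apply: (@HC_iso_of_linear_iso k _ _ s F).
- move=> m; apply: (can_inj (g := linext (@of_std G m))) => p.
  rewrite linext_comp -[RHS]linext_id.
  by apply: eq_in_linext => x _; exact: to_stdK.
- by move=> m p; rewrite /cyc !linearZ /= (linext_comm _ (@to_std_tau G m)).
- by move=> m p; rewrite /invol !linearZ /= (linext_comm _ (@to_std_omega G m)).
- move=> m p; rewrite /bnd linear_sum; apply: eq_bigr => i _.
  by rewrite !linearZ /= (linext_comm _ (@to_std_face G m i)).
- by move=> m p _; apply: msupp_linext; exact: to_std_sub.
move=> m q Mq; exists (linext (@of_std G m) q) => //.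
rewrite /F /= linext_comp -[RHS]linext_id.
by apply: eq_in_linext => y /Mq; exact: of_std_subK.
Qed.
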